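(* Let $X$ be a self-dense (no isolated points) compact metric space and let $f\colon X\to X$ be an inner-distal, totally transitive homeomorphism. Then the set $\operatorname{Per}(f)$ of periodic points of $f$ has empty interior.
   Context: The proximal cell of $x$ is $\mathcal{P}(x)=\{y\in X\colon \inf_{n\in\mathbb{Z}} d(f^n(x),f^n(y))=0\}$; $f$ is inner-distal if $\operatorname{Int}\mathcal{P}(x)=\emptyset$ for all $x$. A homeomorphism $g$ is transitive if some orbit $\{g^n(x)\colon n\in\mathbb{Z}\}$ is dense; $f$ is totally transitive if $f^n$ is transitive for every integer $n\ge1$. $\operatorname{Per}(f)=\{p\colon f^n(p)=p$ for some integer $n\ge1\}$. *)

From Stdlib Require Import Reals ZArith Classical.
Open Scope R_scope.

Record is_metric {X : Type} (d : X -> X -> R) : Prop := {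
  metric_nonneg : forall x y, 0 <= d x y;
  metric_eq0 : forall x y, d x y = 0 <-> x = y;
  metric_sym : forall x y, d x y = d y x;
  metric_tri : forall x y z, d x z <= d x y + d y z
}.

Definition dball {X : Type} (d : X -> X -> R) (x : X) (r : R) : X -> Prop :=
  fun y => d x y < r.

Definition d_open {X : Type} (d : X -> X -> R) (U : X -> Prop) : Prop :=
  forall x, U x -> exists r, 0 < r /\ forall y, dball d x r y -> U y.

Definition compact_space {X : Type} (d : X -> X -> R) : Prop :=
  forall (I : Type) (U : I -> X -> Prop),
    (forall i, d_open d (U i)) -> (forall x, exists i, U i x) ->
    exists l : list I, forall x, exists i, List.In i l /\ U i x.

Definition self_dense {X : Type} (d : X -> X -> R) : Prop :=
  forall x r, 0 < r -> exists y, y <> x /\ d x y < r.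

Definition continuous_map {X : Type} (d : X -> X -> R) (f : X -> X) : Prop :=
  forall x eps, 0 < eps -> exists delta, 0 < delta /\
    forall y, d x y < delta -> d (f x) (f y) < eps.

Definition homeomorphism {X : Type} (d : X -> X -> R) (f g : X -> X) : Prop :=
  continuous_map d f /\ continuous_map d g /\
  (forall x, g (f x) = x) /\ (forall x, f (g x) = x).

Fixpoint iter {X : Type} (n : nat) (h : X -> X) (x : X) : X :=
  match n with O => x | S k => h (iter k h x) end.

Definition zpow {X : Type} (f g : X -> X) (n : Z) (x : X) : X :=
  match n with
  | Z0 => x
  | Zpos p => iter (Pos.to_nat p) f x
  | Zneg p => iter (Pos.to_nat p) g x
  end.

Definition int_set {X : Type} (d : X -> X -> R) (A : X -> Prop) : X -> Prop :=
  fun x => exists r, 0 < r /\ forall y, dball d x r y -> A y.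

(* proximal cell: inf_{n in Z} d(f^n x, f^n y) = 0, i.e. the (nonnegative)
   values get arbitrarily small *)
Definition proximal_cell {X : Type} (d : X -> X -> R) (f g : X -> X) (x : X)
  : X -> Prop :=
  fun y => forall eps, 0 < eps -> exists n : Z, d (zpow f g n x) (zpow f g n y) < eps.

Definition inner_distal {X : Type} (d : X -> X -> R) (f g : X -> X) : Prop :=
  forall x z, ~ int_set d (proximal_cell d f g x) z.

Definition transitive {X : Type} (d : X -> X -> R) (h hi : X -> X) : Prop :=
  exists x, forall y eps, 0 < eps -> exists n : Z, d y (zpow h hi n x) < eps.

Definition totally_transitive {X : Type} (d : X -> X -> R) (f g : X -> X) : Prop :=
  forall n : nat, (1 <= n)%nat -> transitive d (iter n f) (iter n g).

Definition Per {X : Type} (f : X -> X) : X -> Prop :=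
  fun p => exists n : nat, (1 <= n)%nat /\ iter n f p = p.

(** A transitive homeomorphism whose periodic points have nonempty interior
    has a dense orbit passing through a periodic point; that orbit is then a
    finite cycle, and a finite set cannot be dense in a space without isolated
    points. *)
From Stdlib Require Import Reals ZArith List Lra Lia Classical.
(* Imported last, so that [iter] is [Defs.iter] rather than ZArith's [iter]. *)
From Pilot Require Import Defs.
Open Scope R_scope.

Section Iterates.
Context {X : Type}.

Lemma iter_succ_r (h : X -> X) k x : iter (S k) h x = iter k h (h x).
Proof. induction k as [|k IHk]; simpl; [reflexivity|]; simpl in IHk; now rewrite IHk. Qed.

Lemma iter_iter_1 (h : X -> X) k x : iter k (iter 1 h) x = iter k h x.
Proof.
  induction k as [|k IHk]; [reflexivity|].
  change (iter 1 h (iter k (iter 1 h) x) = h (iter k h x)); now rewrite IHk.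
Qed.

Lemma zpow_iter_1 (f g : X -> X) n x : zpow (iter 1 f) (iter 1 g) n x = zpow f g n x.
Proof. destruct n; simpl; [reflexivity|apply iter_iter_1|apply iter_iter_1]. Qed.

Lemma iter_cancel (f g : X -> X) :
  (forall x, g (f x) = x) -> forall k x, iter k g (iter k f x) = x.
Proof.
  intros gK k; induction k as [|k IHk]; intros x; [reflexivity|].
  rewrite iter_succ_r; simpl; rewrite gK; apply IHk.
Qed.

Lemma iter_closed (h : X -> X) (Q : X -> Prop) :
  (forall u, Q u -> Q (h u)) -> forall k u, Q u -> Q (iter k h u).
Proof. intros hQ k u Qu; induction k; simpl; auto. Qed.

Section Invertible.
Variables f g : X -> X.
Hypothesis gK : forall x, g (f x) = x.
Hypothesis fK : forall x, f (g x) = x.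
Variable Q : X -> Prop.
Hypothesis fQ : forall u, Q u -> Q (f u).
Hypothesis gQ : forall u, Q u -> Q (g u).

Lemma zpow_closed n x : Q x -> Q (zpow f g n x).
Proof. destruct n; simpl; auto; apply iter_closed; assumption. Qed.

Lemma zpow_closed_rev n x : Q (zpow f g n x) -> Q x.
Proof.
  destruct n as [|k|k]; simpl; auto; intros Qx.
  - rewrite <- (iter_cancel f g gK (Pos.to_nat k) x); now apply iter_closed.
  - rewrite <- (iter_cancel g f fK (Pos.to_nat k) x); now apply iter_closed.
Qed.

End Invertible.

Definition orbit_list (f : X -> X) (w : X) (p : nat) : list X :=
  map (fun j => iter j f w) (seq 0 p).

Lemma in_orbit_list f w p u :
  In u (orbit_list f w p) <-> exists j, (j < p)%nat /\ u = iter j f w.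
Proof.
  unfold orbit_list; rewrite in_map_iff; split.
  - intros [j [<- Hj]]; apply in_seq in Hj; exists j; split; [lia|reflexivity].
  - intros [j [Hj ->]]; exists j; split; [reflexivity|apply in_seq; lia].
Qed.

Section Cycle.
Variables (f g : X -> X) (w : X) (p : nat).
Hypothesis gK : forall x, g (f x) = x.
Hypothesis p_pos : (1 <= p)%nat.
Hypothesis w_periodic : iter p f w = w.

Lemma orbit_list_closed_f u :
  In u (orbit_list f w p) -> In (f u) (orbit_list f w p).
Proof.
  rewrite !in_orbit_list; intros [j [Hj ->]].
  destruct (Nat.eq_dec (S j) p) as [Ej|Ej].
  - exists 0%nat; split; [lia|]; simpl; now rewrite <- w_periodic at 2; rewrite <- Ej.
  - exists (S j); split; [lia|reflexivity].
Qed.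

Lemma orbit_list_closed_g u :
  In u (orbit_list f w p) -> In (g u) (orbit_list f w p).
Proof.
  rewrite !in_orbit_list; intros [[|j] [Hj ->]].
  - exists (p - 1)%nat; split; [lia|]; simpl.
    rewrite <- w_periodic at 1; replace p with (S (p - 1)) at 1 by lia.
    simpl; apply gK.
  - exists j; split; [lia|]; simpl; apply gK.
Qed.

End Cycle.
End Iterates.

Section Metric.
Context {X : Type} (d : X -> X -> R).
Hypothesis d_metric : is_metric d.

Lemma metric_pos x y : x <> y -> 0 < d x y.
Proof.
  intros xy; destruct (Rle_lt_or_eq_dec _ _ (metric_nonneg d d_metric x y)) as [L|E];
    [exact L|].
  exfalso; apply xy, (metric_eq0 d d_metric); now symmetry.
Qed.

Lemma list_separated (x : X) (l : list X) :
  exists del, 0 < del /\ forall u, In u l -> u = x \/ del <= d x u.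
Proof.
  induction l as [|a l [del [del_pos Hl]]].
  - exists 1; split; [lra|]; intros u [].
  - destruct (classic (a = x)) as [ax|ax].
    + exists del; split; [exact del_pos|]; intros u [<-|Hu]; auto.
    + exists (Rmin del (d x a)); split.
      { apply Rmin_pos; [exact del_pos|apply metric_pos; congruence]. }
      intros u [<-|Hu]; [right; apply Rmin_r|].
      destruct (Hl u Hu) as [E|L]; [now left|right].
      eapply Rle_trans; [apply Rmin_l|exact L].
Qed.

Lemma self_dense_no_finite_dense (x : X) (l : list X) :
  self_dense d -> ~ (forall y eps, 0 < eps -> exists u, In u l /\ d y u < eps).
Proof.
  intros Hsd Hdense.
  destruct (list_separated x l) as [del [del_pos Hsep]].
  destruct (Hsd x (del / 2)) as [y [yx Hxy]]; [lra|].
  assert (xy_pos : 0 < d x y) by (apply metric_pos; congruence).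
  destruct (Hdense y (Rmin (del / 2) (d x y))) as [u [Hu Hyu]];
    [apply Rmin_pos; lra|].
  pose proof (Rmin_l (del / 2) (d x y)); pose proof (Rmin_r (del / 2) (d x y)).
  destruct (Hsep u Hu) as [->|L].
  - rewrite (metric_sym d d_metric) in Hyu; lra.
  - pose proof (metric_tri d d_metric x y u); lra.
Qed.

End Metric.

Theorem theorem2p19 (X : Type) (d : X -> X -> R) (f g : X -> X) :
  is_metric d -> compact_space d -> self_dense d ->
  homeomorphism d f g -> inner_distal d f g -> totally_transitive d f g ->
  forall x, ~ int_set d (Per f) x.
Proof.
  intros d_metric _ Hsd [_ [_ [gK fK]]] _ Htt x [r [r_pos Hint]].
  destruct (Htt 1%nat (le_n 1)) as [z z_dense].
  setoid_rewrite zpow_iter_1 in z_dense.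
  destruct (z_dense x r r_pos) as [n Hn].
  destruct (Hint _ Hn) as [p [p_pos w_periodic]].
  set (cycle := orbit_list f (zpow f g n z) p).
  set (Q := fun u => In u cycle).
  assert (fQ : forall u, Q u -> Q (f u)) by (apply orbit_list_closed_f; assumption).
  assert (gQ : forall u, Q u -> Q (g u)) by (apply orbit_list_closed_g; assumption).
  assert (Qz : Q z).
  { apply (zpow_closed_rev f g gK fK Q fQ gQ n).
    apply in_orbit_list; exists 0%nat; split; [lia|reflexivity]. }
  apply (self_dense_no_finite_dense d d_metric x cycle Hsd).
  intros y eps eps_pos; destruct (z_dense y eps eps_pos) as [m Hm].
  exists (zpow f g m z); split; [apply (zpow_closed f g Q fQ gQ m z Qz)|exact Hm].
Qed.
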